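(* Let $\psi\in[0,2\pi)$ and let $\kappa\in\mathbb{C}$ with $\operatorname{Im}(\kappa)\neq 0$ satisfy $$\cos(\kappa\cos\psi)+\cos(\kappa\sin\psi)-2=0.$$ Then $$\cos\psi\,\sin(\kappa\cos\psi)+\sin\psi\,\sin(\kappa\sin\psi)\neq 0.$$ *)

From Stdlib Require Import Reals.
Open Scope R_scope.

Record Cplx := mkC { Cre : R; Cim : R }.

Definition C0 : Cplx := mkC 0 0.
Definition Cofr (r : R) : Cplx := mkC r 0.
Definition Cadd (z w : Cplx) : Cplx := mkC (Cre z + Cre w) (Cim z + Cim w).
Definition Csub (z w : Cplx) : Cplx := mkC (Cre z - Cre w) (Cim z - Cim w).
Definition Cscale (r : R) (z : Cplx) : Cplx := mkC (r * Cre z) (r * Cim z).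

(* complex cosine and sine: cos(a+ib) = cos a cosh b - i sin a sinh b,
   sin(a+ib) = sin a cosh b + i cos a sinh b *)
Definition Ccos (z : Cplx) : Cplx :=
  mkC (cos (Cre z) * cosh (Cim z)) (- (sin (Cre z) * sinh (Cim z))).
Definition Csin (z : Cplx) : Cplx :=
  mkC (sin (Cre z) * cosh (Cim z)) (cos (Cre z) * sinh (Cim z)).

From Stdlib Require Import Reals Lra Psatz.
Open Scope R_scope.

(* Write z1 = c*kappa, z2 = s*kappa with c = cos psi, s = sin psi, and
   w_i = cos z_i.  If also c sin z1 + s sin z2 = 0, then squaring gives
   c^2 (1 - w1^2) = s^2 (1 - w2^2), which together with w1 + w2 = 2 factors as
   (w2 - 1) ((c^2 - s^2)(w2 - 1) - 2) = 0.  Either way w1 and w2 are real.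
   A cosine cos(x + iy) with y <> 0 is real only if it equals +-cosh y, while
   |cos(x + iy)| <= cosh y always.  By symmetry let c^2 >= s^2: then w1 = 1 is
   impossible, and the second factor forces |w1| < w2, contradicting
   |w1| = cosh(c Im kappa) >= cosh(s Im kappa) >= |w2|. *)

Lemma cosh_sqr_sub_sinh_sqr (y : R) : cosh y * cosh y - sinh y * sinh y = 1.
Proof.
  unfold cosh, sinh. rewrite exp_Ropp.
  pose proof (exp_pos y). field. lra.
Qed.

Lemma cosh_pos (y : R) : 0 < cosh y.
Proof.
  unfold cosh. pose proof (exp_pos y). pose proof (exp_pos (- y)). lra.
Qed.

Lemma sinh_neq_0 (y : R) : y <> 0 -> sinh y <> 0.
Proof.
  intros hy. rewrite <- sinh_0.
  destruct (Rdichotomy _ _ hy) as [h | h]; apply sinh_lt in h; lra.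
Qed.

Lemma cosh_Rabs (y : R) : cosh (Rabs y) = cosh y.
Proof.
  unfold Rabs. destruct (Rcase_abs y); [|reflexivity].
  unfold cosh. rewrite Ropp_involutive. lra.
Qed.

Lemma cosh_lt_sqr (p q : R) : p * p < q * q -> cosh p < cosh q.
Proof.
  intros hpq.
  rewrite <- (cosh_Rabs p), <- (cosh_Rabs q).
  assert (habs : Rabs p < Rabs q) by (apply Rsqr_lt_abs_0; exact hpq).
  assert (hsinh : sinh 0 <= sinh (Rabs p) < sinh (Rabs q)).
  { split; [|now apply sinh_lt].
    destruct (Rabs_pos p) as [h | h]; [apply sinh_lt in h|rewrite <- h]; lra. }
  rewrite sinh_0 in hsinh.
  pose proof (cosh_sqr_sub_sinh_sqr (Rabs p)).
  pose proof (cosh_sqr_sub_sinh_sqr (Rabs q)).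
  pose proof (cosh_pos (Rabs p)). pose proof (cosh_pos (Rabs q)).
  nra.
Qed.

Lemma one_lt_cosh (y : R) : y <> 0 -> 1 < cosh y.
Proof.
  intros hy. rewrite <- cosh_0. apply cosh_lt_sqr.
  pose proof (Rsqr_pos_lt y hy). unfold Rsqr in *. lra.
Qed.

Declare Scope C_scope.
Delimit Scope C_scope with C.

Definition C1 : Cplx := mkC 1 0.
Definition Copp (z : Cplx) : Cplx := mkC (- Cre z) (- Cim z).
Definition Cmul (z w : Cplx) : Cplx :=
  mkC (Cre z * Cre w - Cim z * Cim w) (Cre z * Cim w + Cim z * Cre w).

Infix "+" := Cadd : C_scope.
Infix "-" := Csub : C_scope.
Infix "*" := Cmul : C_scope.

Lemma Cplx_eq (z w : Cplx) : Cre z = Cre w -> Cim z = Cim w -> z = w.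
Proof. destruct z, w; simpl; intros -> ->; reflexivity. Qed.

Lemma Cplx_ring_theory : ring_theory C0 C1 Cadd Cmul Csub Copp (@eq Cplx).
Proof. constructor; intros; apply Cplx_eq; simpl; ring. Qed.

Add Ring Cplx_ring : Cplx_ring_theory.

Lemma Cmul_integral (z w : Cplx) : (z * w)%C = C0 -> z = C0 \/ w = C0.
Proof.
  destruct z as [a b], w as [x y]. unfold Cmul, C0. simpl.
  intros h. injection h as hre him.
  destruct (Req_dec (a * a + b * b) 0) as [hz | hz].
  - left. apply Cplx_eq; simpl; nra.
  - right. apply Cplx_eq; simpl; apply (Rmult_eq_reg_l (a * a + b * b)); try lra.
    + transitivity (a * (a * x - b * y) + b * (a * y + b * x)); [ring|].
      rewrite hre, him. ring.
    + transitivity (a * (a * y + b * x) - b * (a * x - b * y)); [ring|].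
      rewrite hre, him. ring.
Qed.

Lemma Cscale_Cmul (r : R) (z : Cplx) : Cscale r z = (Cofr r * z)%C.
Proof. apply Cplx_eq; simpl; ring. Qed.

Lemma Cofr_2 : Cofr 2 = (C1 + C1)%C.
Proof. apply Cplx_eq; simpl; ring. Qed.

Lemma Ccos_sqr_add_Csin_sqr (z : Cplx) : (Ccos z * Ccos z + Csin z * Csin z)%C = C1.
Proof.
  destruct z as [x y]. pose proof (sin2_cos2 x) as hx. unfold Rsqr in hx.
  apply Cplx_eq; simpl; [|ring].
  transitivity ((sin x * sin x + cos x * cos x) * (cosh y * cosh y - sinh y * sinh y));
    [ring|].
  rewrite hx, cosh_sqr_sub_sinh_sqr. ring.
Qed.

Lemma Rabs_Re_Ccos_le (z : Cplx) : Rabs (Cre (Ccos z)) <= cosh (Cim z).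
Proof.
  destruct z as [x y]. simpl.
  rewrite Rabs_mult, (Rabs_pos_eq (cosh y)) by (left; apply cosh_pos).
  pose proof (COS_bound x) as hcos. apply Rabs_le in hcos.
  pose proof (cosh_pos y). nra.
Qed.

Lemma Ccos_real_Rabs (z : Cplx) :
  Cim z <> 0 -> Cim (Ccos z) = 0 -> Rabs (Cre (Ccos z)) = cosh (Cim z).
Proof.
  destruct z as [x y]. simpl. intros hy him.
  assert (hsin : sin x = 0).
  { pose proof (sinh_neq_0 y hy). nra. }
  assert (hcos : Rabs (cos x) = 1).
  { rewrite <- Rabs_R1. apply Rsqr_eq_abs_0.
    pose proof (sin2_cos2 x). unfold Rsqr in *. rewrite hsin in *. lra. }
  rewrite Rabs_mult, hcos, Rabs_pos_eq by (left; apply cosh_pos). ring.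
Qed.

Lemma cos_sum_two_factor (c s w1 w2 u1 u2 : Cplx) :
  (w1 * w1 + u1 * u1 = C1)%C -> (w2 * w2 + u2 * u2 = C1)%C ->
  (w1 + w2 = C1 + C1)%C -> (c * u1 + s * u2 = C0)%C ->
  ((w2 - C1) * ((c * c - s * s) * (w2 - C1) - (C1 + C1) * (c * c + s * s)) = C0)%C.
Proof.
  intros h1 h2 hsum hlin.
  assert (hw1 : w1 = (C1 + C1 - w2)%C) by (rewrite <- hsum; ring).
  transitivity (s * s * (C1 - w2 * w2) - c * c * (C1 - w1 * w1))%C;
    [rewrite hw1; ring|].
  replace (C1 - w1 * w1)%C with (u1 * u1)%C by (rewrite <- h1; ring).
  replace (C1 - w2 * w2)%C with (u2 * u2)%C by (rewrite <- h2; ring).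
  transitivity ((s * u2 - c * u1) * (c * u1 + s * u2))%C; [ring|].
  rewrite hlin. ring.
Qed.

Lemma Ccos_sum_two_real (c s : R) (z1 z2 : Cplx) :
  c * c + s * s = 1 ->
  (Ccos z1 + Ccos z2 = C1 + C1)%C ->
  (Cofr c * Csin z1 + Cofr s * Csin z2 = C0)%C ->
  Cim (Ccos z1) = 0 /\
  (Cre (Ccos z1) = 1 \/ (c * c - s * s) * (Cre (Ccos z2) - Cre (Ccos z1)) = 4).
Proof.
  intros hcs hsum hlin.
  pose proof (cos_sum_two_factor _ _ _ _ _ _
    (Ccos_sqr_add_Csin_sqr z1) (Ccos_sqr_add_Csin_sqr z2) hsum hlin) as hfac.
  set (w1 := Ccos z1) in *. set (w2 := Ccos z2) in *.
  clearbody w1 w2.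
  pose proof (f_equal Cre hsum) as hre. pose proof (f_equal Cim hsum) as him.
  simpl in hre, him.
  destruct (Cmul_integral _ _ hfac) as [h | h];
    pose proof (f_equal Cre h) as hre2; pose proof (f_equal Cim h) as him2;
    simpl in hre2, him2.
  - lra.
  - assert (ht : (c * c - s * s) * (Cre w2 - 1) = 2) by lra.
    assert (him2' : (c * c - s * s) * Cim w2 = 0) by lra.
    assert (Cim w2 = 0).
    { apply Rmult_integral in him2'. destruct him2' as [ht0 | ]; [|assumption].
      rewrite ht0 in ht. lra. }
    split; [lra|]. right.
    replace (Cre w1) with (2 - Cre w2) by lra. lra.
Qed.

Lemma Ccos_Csin_no_common_root (c s : R) (kappa : Cplx) :
  c * c + s * s = 1 -> s * s <= c * c -> Cim kappa <> 0 ->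
  Csub (Cadd (Ccos (Cscale c kappa)) (Ccos (Cscale s kappa))) (Cofr 2) = C0 ->
  Cadd (Cscale c (Csin (Cscale c kappa))) (Cscale s (Csin (Cscale s kappa))) <> C0.
Proof.
  intros hcs hle hb hcos hsin.
  set (z1 := Cscale c kappa) in *. set (z2 := Cscale s kappa) in *.
  assert (hsum : (Ccos z1 + Ccos z2 = C1 + C1)%C).
  { rewrite <- Cofr_2. transitivity (Ccos z1 + Ccos z2 - Cofr 2 + Cofr 2)%C; [ring|].
    rewrite hcos. ring. }
  rewrite !Cscale_Cmul in hsin.
  destruct (Ccos_sum_two_real c s z1 z2 hcs hsum hsin) as (him1 & [h1 | hgap]).
  - assert (hcb : Cim z1 <> 0) by (simpl; apply Rmult_integral_contrapositive; split; nra).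
    pose proof (Ccos_real_Rabs z1 hcb him1) as habs.
    pose proof (one_lt_cosh _ hcb).
    rewrite h1, Rabs_R1 in habs. lra.
  - assert (hlt : s * s < c * c).
    { destruct (Rle_lt_or_eq_dec _ _ hle) as [| heq]; [assumption|].
      replace (c * c - s * s) with 0 in hgap by lra. lra. }
    assert (hcb : Cim z1 <> 0) by (simpl; apply Rmult_integral_contrapositive; split; nra).
    pose proof (Ccos_real_Rabs z1 hcb him1) as habs1.
    pose proof (Rabs_Re_Ccos_le z2) as habs2.
    assert (hcosh : cosh (Cim z2) < cosh (Cim z1)).
    { apply cosh_lt_sqr. simpl. pose proof (Rsqr_pos_lt _ hb). unfold Rsqr in *. nra. }
    pose proof (f_equal Cre hsum) as hre. cbn [Cre Cadd C1] in hre.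
    assert (hgap_pos : 0 < Cre (Ccos z2) - Cre (Ccos z1)).
    { apply (Rmult_lt_reg_l (c * c - s * s)); [lra|]. rewrite hgap. lra. }
    assert (hw : Rabs (Cre (Ccos z1)) < Cre (Ccos z2)) by (apply Rabs_def1; lra).
    pose proof (Rle_abs (Cre (Ccos z2))). lra.
Qed.

Theorem mainTheorem4 (psi : R) (kappa : Cplx) :
  0 <= psi < 2 * PI ->
  Cim kappa <> 0 ->
  Csub (Cadd (Ccos (Cscale (cos psi) kappa)) (Ccos (Cscale (sin psi) kappa)))
       (Cofr 2) = C0 ->
  Cadd (Cscale (cos psi) (Csin (Cscale (cos psi) kappa)))
       (Cscale (sin psi) (Csin (Cscale (sin psi) kappa))) <> C0.
Proof.
  intros _ hb hcos.
  assert (hcs : cos psi * cos psi + sin psi * sin psi = 1).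
  { pose proof (sin2_cos2 psi). unfold Rsqr in *. lra. }
  destruct (Rle_lt_dec (sin psi * sin psi) (cos psi * cos psi)) as [hle | hlt].
  - exact (Ccos_Csin_no_common_root _ _ kappa hcs hle hb hcos).
  - intros hsin.
    apply (Ccos_Csin_no_common_root (sin psi) (cos psi) kappa); [lra | lra | exact hb | |].
    + rewrite <- hcos. ring.
    + rewrite <- hsin. ring.
Qed.
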